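(* Let $w$ be a string of length $n$ and $i$ a position of $w$ with $i-\mu(i)\ge1$, $i+\mu(i)-1\le n$ and $\mu(i)>1$. Fix an integer $j$ with $i<j<i+\mu(i)$. Then for every $h$ with $i<h\le j$ and $\mu(h)>1$, we have $\mu(h)\le\max\{\mu(h') : i<h'\le j \text{ and } h'-\mu(h')<i\}$.
   Context: For a position $i\in\{1,\dots,n\}$ of $w$, the local period $\mu(i)$ is the least positive integer $\mu$ such that $w[j]=w[j+\mu]$ for all $j$ with $\max\{1,i-\mu\}\le j$ and $j+\mu\le\min\{n,i+\mu-1\}$. The maximum of the empty set is taken to be $-\infty$ (so the claim in particular asserts the set is nonempty whenever such an $h$ exists). *)

From mathcomp Require Import all_boot.
Set Implicit Arguments. Unset Strict Implicit. Unset Printing Implicit Defensive.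

(* Strings are sequences over an eqType T; positions are 1-based:
   w[j] is the (j-1)-th element of the seq (onth avoids a default letter). *)
Definition letter (T : eqType) (w : seq T) (j : nat) : option T := onth w j.-1.

(* m satisfies the local-period condition at position i:
   w[j] = w[j+m] for all j with max(1, i-m) <= j and j+m <= min(n, i+m-1).
   (Every such j is <= n, so quantifying over j in [0, n] is exhaustive;
   truncated subtraction i-m agrees with the integer one after maxn 1.) *)
Definition lp_cond (T : eqType) (w : seq T) (i m : nat) : bool :=
  all (fun j => ((maxn 1 (i - m) <= j) && (j + m <= minn (size w) (i + m - 1)))
                ==> (letter w j == letter w (j + m)))
      (iota 0 (size w).+1).

Definition is_lp (T : eqType) (w : seq T) (i : nat) : pred nat :=
  fun m => (0 < m) && lp_cond w i m.

Lemma is_lp_exists (T : eqType) (w : seq T) (i : nat) :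
  exists m, is_lp w i m.
Proof.
exists (size w).+1; apply/andP; split => //.
apply/allP => j _; apply/implyP => /andP [_ H].
have := leq_trans H (geq_minl _ _).
by rewrite addnS ltnNge leq_addl.
Qed.

Definition mu (T : eqType) (w : seq T) (i : nat) : nat :=
  ex_minn (is_lp_exists w i).

From mathcomp Require Import all_boot order zify.
From Stdlib Require Import Lia.
Set Implicit Arguments. Unset Strict Implicit. Unset Printing Implicit Defensive.

Import Order.TTheory.

(* Critical factorization (Crochemore-Perrin): if q > 1 is the least period of
   a word, let t and t' start the lexicographically maximal suffixes for an
   order on the letters and for its dual.  The larger of the two lies in
   (0, q) and carries no repetition of length r < q: a short one contradicts
   maximality, a long one would make r a period.  Applied to the factor
   w[h - mu(h) .. h + mu(h) - 1], whose least period is mu(h), this gives a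
   position c in (h - mu(h), h) with mu(c) >= mu(h); Lemma 9 follows by
   descending along such positions until h' - mu(h') < i. *)

Section Repetitions.
Variables (T : Type) (x0 : T) (x : seq T).
Local Notation L := (size x).
Local Notation X k := (nth x0 x k).

Definition has_period r := forall k, k + r < L -> X k = X (k + r).

(* A repetition of length r at the cut between positions t - 1 and t
   (0-based), truncated at both ends of the word. *)
Definition repetition t r :=
  forall k, t - r <= k < t -> k + r < L -> X k = X (k + r).

Lemma period_repetition t r : has_period r -> repetition t r.
Proof. by move=> per k _; apply: per. Qed.

Lemma repetition_period t r :
  t <= r -> L <= t + r -> repetition t r -> has_period r.
Proof. by move=> tr Lle rep k kL; apply: rep => //; lia. Qed.

Lemma take_drop_shift a l r :
    a + l + r <= L -> (forall k, a <= k < a + l -> X k = X (k + r)) ->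
  take l (drop a x) = take l (drop (a + r) x).
Proof.
move=> alrL rep; have sizes b : b <= a + r -> size (take l (drop b x)) = l.
  by move=> br; rewrite size_takel // size_drop; lia.
apply: (@eq_from_nth _ x0) => [|k]; first by rewrite !sizes //; lia.
rewrite sizes; last lia; move=> kl.
rewrite !nth_take // !nth_drop rep; last lia.
by rewrite addnAC.
Qed.

Lemma drop_cat_shift s r c : drop s x = drop (s + r) x ++ c ->
  forall k, s <= k -> k + r < L -> X k = X (k + r).
Proof.
move=> Es k sk krL; have := congr1 (nth x0 ^~ (k - s)) Es.
rewrite nth_cat size_drop ifT; last lia.
by rewrite !nth_drop subnKC // addnAC subnKC.
Qed.

Lemma shift_drop_cat s r : s + r <= L ->
    (forall k, s <= k -> k + r < L -> X k = X (k + r)) ->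
  drop s x = drop (s + r) x ++ drop (L - r) x.
Proof.
move=> srL rep; rewrite -{1}(cat_take_drop (L - (s + r)) (drop s x)) drop_drop.
rewrite (@take_drop_shift s (L - (s + r)) r); first 1 last.
- lia.
- by move=> k /andP[sk kl]; apply: rep; lia.
by rewrite take_oversize ?size_drop //; congr (_ ++ drop _ x); lia.
Qed.

End Repetitions.

Section LexicographicOrder.
Context {d : Order.disp_t} (T : orderType d).
Implicit Types a b p : seq T.

Lemma lexi_catl p a b :
  (p ++ a <= p ++ b :> seqlexi T)%O = (a <= b :> seqlexi T)%O.
Proof. by elim: p => //= c p IH; rewrite eqhead_lexiE. Qed.

Lemma lexi_prefix a b : (a <= a ++ b :> seqlexi T)%O.
Proof. by elim: a => //= c a IH; rewrite eqhead_lexiE. Qed.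

Lemma lexi_dual_prefix a b :
  (a <= b :> seqlexi T)%O -> (a <= b :> seqlexi T^d)%O -> prefix a b.
Proof.
elim: a b => [|c a IH] [|e b] //; rewrite !lexi_cons /=.
case/andP=> ce /implyP ab /andP[ec /implyP ab'].
have ec' : (e <= c)%O by [].
have -> : c = e by apply/le_anti; rewrite ce ec'.
by rewrite eqxx IH ?ab ?ab'.
Qed.

End LexicographicOrder.

Section MaximalSuffix.
Context {d : Order.disp_t} (T : orderType d) (x0 : T) (x : seq T).
Local Notation L := (size x).

Definition max_suffix t := forall k, (drop k x <= drop t x :> seqlexi T)%O.

Lemma max_suffix_exists : 0 < L -> exists2 t, t < L & max_suffix t.
Proof.
move=> L0; pose F (k : 'I_L) : seqlexi T := drop k x.
case: (@arg_maxP _ _ _ (Ordinal L0) xpredT F isT) => t _ tmax; exists t => // k.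
have [kL|Lk] := ltnP k L; first exact: (tmax (Ordinal kL)).
by rewrite drop_oversize.
Qed.

Lemma max_suffix_proper_prefix s t c :
  s < t -> s < L -> drop s x = drop t x ++ c -> ~ max_suffix t.
Proof.
move=> st sL Es tmax.
have : drop s x = drop t x.
  by apply: (@le_anti _ (seqlexi T)); rewrite tmax Es lexi_prefix.
by move/(congr1 size); rewrite !size_drop; lia.
Qed.

Lemma max_suffix_repetition_free t r :
  max_suffix t -> t < L -> 0 < r <= t -> ~ repetition x0 x t r.
Proof.
move=> tmax tL /andP[r0 rt] rep.
have [trL|Ltr] := leqP (t + r) L; last first.
  apply: (@max_suffix_proper_prefix (t - r) t (drop (L - r) x)) tmax; [lia | lia |].
  rewrite -{2}(subnK rt); apply: shift_drop_cat; first lia.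
  by move=> k tk kL; apply: rep => //; lia.
set u := take r (drop t x).
have Et : drop t x = u ++ drop (t + r) x.
  by rewrite -{1}(cat_take_drop r (drop t x)) drop_drop addnC.
have Etr : drop (t - r) x = u ++ drop t x.
  rewrite -{1}(cat_take_drop r (drop (t - r) x)) drop_drop subnKC //.
  rewrite (@take_drop_shift _ x0 x (t - r) r r) ?subnK //.
  by move=> k /andP[? ?]; apply: rep; lia.
have : drop t x = drop (t + r) x.
  by apply: (@le_anti _ (seqlexi T)); rewrite tmax -(lexi_catl u) -Et -Etr tmax.
by move/(congr1 size); rewrite !size_drop; lia.
Qed.

Lemma max_suffix_lt_period t q :
  max_suffix t -> t < L -> 0 < q -> has_period x0 x q -> t < q.
Proof.
move=> tmax tL q0 per; rewrite ltnNge; apply/negP => qt.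
have rep := @period_repetition _ x0 x t q per.
by apply: (max_suffix_repetition_free tmax tL _ rep); rewrite q0.
Qed.

End MaximalSuffix.

Section CriticalFactorization.
Context {d : Order.disp_t} (T : orderType d) (x0 : T) (x : seq T).
Local Notation L := (size x).

Lemma max_suffix_pair_period t t' r :
    max_suffix x t -> max_suffix (x : seq T^d) t' -> t' <= t -> t < r ->
  repetition x0 x t r -> has_period x0 x r.
Proof.
move=> tmax t'max t't tr rep.
have [Ltr|trL] := leqP L (t + r); first exact: repetition_period (ltnW tr) Ltr rep.
set u := take (t - t') (drop t' x).
have Et' : drop t' x = u ++ drop t x.
  by rewrite -{1}(cat_take_drop (t - t') (drop t' x)) drop_drop subnK.
have Et'r : drop (t' + r) x = u ++ drop (t + r) x.
  rewrite /u (@take_drop_shift _ x0 x t' (t - t') r); first 1 last.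
  - lia.
  - by move=> k /andP[? ?]; apply: rep; lia.
  rewrite -{1}(cat_take_drop (t - t') (drop (t' + r) x)) drop_drop.
  by congr (_ ++ drop _ x); lia.
have /prefixP[c Ec] : prefix (drop (t + r) x) (drop t x).
  apply: lexi_dual_prefix; first exact: tmax.
  by have := t'max (t' + r); rewrite Et' Et'r lexi_catl.
move=> k krL; have [kt|tk] := ltnP k t; first by apply: rep => //; lia.
exact: drop_cat_shift Ec k tk krL.
Qed.

Lemma max_suffix_critical t t' q :
    max_suffix x t -> max_suffix (x : seq T^d) t' -> t' <= t -> t < L ->
    (forall r, 0 < r < q -> ~ has_period x0 x r) ->
  forall r, 0 < r < q -> ~ repetition x0 x t r.
Proof.
move=> tmax t'max t't tL noper r /andP[r0 rq] rep.
have [rt|tr] := leqP r t.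
  by apply: (max_suffix_repetition_free tmax tL _ rep); rewrite r0.
apply: (noper r); first by rewrite r0.
exact: max_suffix_pair_period tmax t'max t't tr rep.
Qed.

End CriticalFactorization.

Theorem critical_factorization_ord {d : Order.disp_t} (T : orderType d)
    (x0 : T) (x : seq T) q :
    1 < q -> has_period x0 x q -> (forall r, 0 < r < q -> ~ has_period x0 x r) ->
  exists t, 0 < t < q /\ forall r, 0 < r < q -> ~ repetition x0 x t r.
Proof.
move=> q1 per noper.
have x_gt0 : 0 < size x.
  by rewrite lt0n; apply/eqP => x_nil; apply: (noper 1) => // k; rewrite x_nil.
have critical t : t < q -> (forall r, 0 < r < q -> ~ repetition x0 x t r) ->
    exists t, 0 < t < q /\ forall r, 0 < r < q -> ~ repetition x0 x t r.
  (* t = 0 is excluded since a repetition at the cut 0 is vacuous. *)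
  move=> tq crit; exists t; split => //; rewrite tq andbT lt0n.
  by apply/eqP => t0; apply: (crit 1); rewrite ?q1 // t0.
have [t1 t1L t1max] := max_suffix_exists x_gt0.
have [t2 t2L t2max] := @max_suffix_exists _ T^d x x_gt0.
have t1q := max_suffix_lt_period t1max t1L (ltnW q1) per.
have t2q := @max_suffix_lt_period _ T^d x0 x t2 q t2max t2L (ltnW q1) per.
have [t21|t12] := leqP t2 t1.
  exact: critical t1 t1q (max_suffix_critical t1max t2max t21 t1L noper).
exact: critical t2 t2q
  (@max_suffix_critical _ T^d x0 x t2 t1 q t2max t1max (ltnW t12) t2L noper).
Qed.

Section IndexCode.
Variables (T : eqType) (x0 : T) (x : seq T).
Local Notation L := (size x).
Local Notation X k := (nth x0 x k).

(* Letters of an eqType are only comparable after this recoding into nat. *)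
Definition index_code := [seq index a x | a <- x].

Lemma index_code_eq k l : k < L -> l < L ->
  (nth 0 index_code k == nth 0 index_code l) = (X k == X l).
Proof.
move=> kL lL; rewrite !(nth_map x0) //; apply/eqP/eqP => [E|-> //].
by rewrite -(nth_index x0 (mem_nth x0 kL)) E nth_index // mem_nth.
Qed.

Lemma has_period_index_code r : has_period 0 index_code r <-> has_period x0 x r.
Proof.
rewrite /has_period size_map; split=> per k krL; apply/eqP.
  by rewrite -index_code_eq; [apply/eqP/per | lia | lia].
by rewrite index_code_eq; [apply/eqP/per | lia | lia].
Qed.

Lemma repetition_index_code t r :
  repetition 0 index_code t r <-> repetition x0 x t r.
Proof.
rewrite /repetition size_map; split=> rep k tk krL; apply/eqP.
  by rewrite -index_code_eq; [apply/eqP/rep | lia | lia].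
by rewrite index_code_eq; [apply/eqP/rep | lia | lia].
Qed.

End IndexCode.

Theorem critical_factorization (T : eqType) (x0 : T) (x : seq T) q :
    1 < q -> has_period x0 x q -> (forall r, 0 < r < q -> ~ has_period x0 x r) ->
  exists t, 0 < t < q /\ forall r, 0 < r < q -> ~ repetition x0 x t r.
Proof.
move=> q1 /has_period_index_code per noper.
have [|t [tq crit]] := critical_factorization_ord q1 per.
  by move=> r rq /(has_period_index_code x0); apply: noper.
by exists t; split=> // r rq /(repetition_index_code x0); apply: crit.
Qed.

Section LocalPeriod.
Variables (T : eqType) (w : seq T).
Local Notation n := (size w).

Lemma lp_condP i m :
  reflect (forall j, j <= n -> maxn 1 (i - m) <= j -> j + m <= minn n (i + m - 1) ->
             letter w j = letter w (j + m))
          (lp_cond w i m).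
Proof.
apply: (iffP allP) => [lp j jn lo hi | lp j]; last first.
  by rewrite mem_iota ltnS => /andP[_ jn]; apply/implyP => /andP[lo hi]; rewrite lp.
by apply/eqP; have /implyP := lp j; rewrite mem_iota ltnS jn lo hi; apply.
Qed.

Lemma is_lp_mu i : is_lp w i (mu w i).
Proof. by rewrite /mu; case: ex_minnP. Qed.

Lemma mu_min i r : is_lp w i r -> mu w i <= r.
Proof. by rewrite /mu; case: ex_minnP => m _; apply. Qed.

Definition window g m := mkseq (fun k => letter w (g + k)) (m.+1 - g).

Lemma nth_window g m k : k < m.+1 - g -> nth None (window g m) k = letter w (g + k).
Proof. exact: nth_mkseq. Qed.

Lemma lp_cond_window_repetition g m p r :
  1 <= g <= p -> m <= n -> lp_cond w p r -> repetition None (window g m) (p - g) r.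
Proof.
move=> /andP[g1 gp] mn /lp_condP lp k /andP[lo hi]; rewrite size_mkseq => krm.
rewrite !nth_window; try lia.
by rewrite addnA lp //; lia.
Qed.

Lemma window_period_lp_cond g m p r :
    g + r <= p -> minn n (p + r - 1) <= m ->
  has_period None (window g m) r -> lp_cond w p r.
Proof.
move=> grp hi per; apply/lp_condP => j jn lo jr.
have := per (j - g); rewrite size_mkseq !nth_window; try lia.
by rewrite addnA subnKC; [apply; lia | lia].
Qed.

End LocalPeriod.

Lemma exists_mu_ge_before (T : eqType) (w : seq T) h :
    1 <= h - mu w h -> h <= size w -> 1 < mu w h ->
  exists2 c, h - mu w h < c < h & mu w h <= mu w c.
Proof.
set q := mu w h; set g := h - q; set m := minn (size w) (h + q - 1) => g1 hn q1.
have /andP[q0 lpq] := is_lp_mu w h; rewrite -/q in q0 lpq.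
have mn : m <= size w by apply: geq_minl.
have hm : h <= m by rewrite leq_min hn; lia.
have mhq : m <= h + q - 1 by apply: geq_minr.
have per : has_period None (window w g m) q.
  apply: (@repetition_period _ _ _ q); rewrite ?size_mkseq //; first lia.
  have := lp_cond_window_repetition (g := g) (m := m) _ mn lpq.
  by rewrite subKn; [apply; lia | lia].
have noper r : 0 < r < q -> ~ has_period None (window w g m) r.
  move=> /andP[r0 rq] /window_period_lp_cond lp.
  suff : q <= r by lia.
  apply: mu_min; rewrite /is_lp r0 lp //; first lia.
  by rewrite geq_min leq_min; lia.
have [t [/andP[t0 tq] crit]] := critical_factorization q1 per noper.
exists (g + t); first lia.
rewrite leqNgt; apply/negP => muq.
have /andP[r0 lpr] := is_lp_mu w (g + t).
apply: (crit (mu w (g + t))); first by rewrite r0.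
have := lp_cond_window_repetition (g := g) (m := m) _ mn lpr.
by rewrite addKn; apply; lia.
Qed.

Theorem lemma9 (T : eqType) (w : seq T) (i j : nat) :
  1 <= i <= size w ->
  1 <= i - mu w i ->
  i + mu w i - 1 <= size w ->
  1 < mu w i ->
  i < j < i + mu w i ->
  forall h : nat, i < h <= j -> 1 < mu w h ->
  exists h' : nat, [/\ i < h' <= j, h' < i + mu w h' & mu w h <= mu w h'].
Proof.
move=> /andP[i1 _] _ iwn _ /andP[_ jlt]; elim/ltn_ind => h IH /andP[ih hj] mu1.
have [hmu|muh] := ltnP h (i + mu w h); first by exists h; split; rewrite ?ih.
have [c /andP[hc ch] muc] :=
  exists_mu_ge_before (w := w) (h := h) ltac:(lia) ltac:(lia) mu1.
have [h' [h'ij h'mu muh']] := IH c ch ltac:(lia) (leq_trans mu1 muc).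
by exists h'; split=> //; apply: leq_trans muc muh'.
Qed.
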